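(* Let $n\ge 3$ be odd and let $WC_n^d$ denote the fully whiskered $n$-cycle graph. Then $M_2(WC_n^d)\simeq S^{n-1}$.
   Context: The fully whiskered graph of a graph $G$ is obtained by attaching a leaf (a new vertex joined by one edge) to every vertex of $G$; $WC_n^d$ is the fully whiskered graph of the cycle on $n$ vertices. A $2$-matching of a graph is a set of edges such that every vertex has degree at most $2$ in it. $M_2(G)$ is the simplicial complex whose vertices are the edges of $G$ and whose faces are the $2$-matchings of $G$. *)

From HB Require Import structures.
From mathcomp Require Import all_boot all_order all_algebra.
From mathcomp Require Import all_classical all_reals topology normedtype.
Import numFieldNormedType.Exports.
Set Implicit Arguments. Unset Strict Implicit. Unset Printing Implicit Defensive.
Import Order.TTheory GRing.Theory Num.Theory.

Definition edges (V : finType) (adj : rel V) : {set {set V}} :=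
  [set e : {set V} | [exists x, exists y, adj x y && (e == [set x; y])]].

Definition two_matching_complex (V : finType) (adj : rel V)
  : {set {set {set V}}} :=
  [set F : {set {set V}} | (F \subset edges adj) &&
     [forall v : V, #|[set e in F | v \in e]| <= 2]].

(* The fully whiskered n-cycle WC_n^d: vertices inl i (cycle vertices,
   i in Z/n) and inr i (the leaf attached to inl i). *)
Definition WC_adj (n : nat) : rel ('I_n + 'I_n) :=
  fun x y => match x, y with
  | inl i, inl j => (val j == (val i).+1 %% n)%N || (val i == (val j).+1 %% n)%N
  | inl i, inr j => i == j
  | inr i, inl j => i == j
  | inr _, inr _ => false
  end.

Local Open Scope classical_set_scope.
Local Open Scope ring_scope.

Definition realization (R : realType) (T : finType) (K : {set {set T}})
  : set {ptws T -> R} :=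
  [set x | (forall t, 0 <= x t) /\ \sum_(t : T) x t = 1 /\
           exists2 F, F \in K & forall t, x t != 0 -> t \in F].

(* The sphere S^(m-1) as the unit sphere of R^m. *)
Definition sphere (R : realType) (m : nat) : set {ptws 'I_m -> R} :=
  [set x | \sum_(i < m) x i ^+ 2 = 1].

Definition homotopic_on (R : realType) (X Y : topologicalType)
  (A : set X) (B : set Y) (f g : X -> Y) : Prop :=
  exists H : R * X -> Y,
    {within `[0, 1] `*` A, continuous H} /\
    (forall t a, t \in `[0, 1] -> A a -> B (H (t, a))) /\
    (forall a, A a -> H (0, a) = f a) /\
    (forall a, A a -> H (1, a) = g a).

Definition homotopy_equivalent (R : realType) (X Y : topologicalType)
  (A : set X) (B : set Y) : Prop :=
  exists (f : X -> Y) (g : Y -> X),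
    [/\ {within A, continuous f}, {within B, continuous g},
        (forall a, A a -> B (f a)) & (forall b, B b -> A (g b))] /\
    homotopic_on R A A (g \o f) id /\ homotopic_on R B B (f \o g) id.

Arguments realization R {T} K.
Arguments sphere : clear implicits.
Arguments homotopy_equivalent R {X Y} A B.
Arguments homotopic_on R {X Y} A B f g.

From HB Require Import structures.
From mathcomp Require Import all_boot all_order all_algebra.
From mathcomp Require Import all_classical all_reals topology normedtype.
From mathcomp Require Import realfun lra zify.
Import numFieldNormedType.Exports.
Set Implicit Arguments. Unset Strict Implicit. Unset Printing Implicit Defensive.
Import Order.TTheory GRing.Theory Num.Theory.

(* The faces of M_2(WC_n) are the sets of edges, among the cycle edges
   c_i = {i, i+1} and the whiskers w_i, that contain no star
   {c_(i-1), c_i, w_i}.  The boundary of the cross-polytope with antipodal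
   pairs {c_i, w_i} lies inside: a point s of the sphere goes to the point
   with weights s_i^+ on c_i and s_i^- on w_i, normalised in l^1.
   Conversely a point x of the complex goes to d / |d|_2, where
     d_i = x(c_i) - x(w_i) - 2 min(x(c_(i+1)), x(w_(i+1))).
   The correction term vanishes on the cross-polytope, so the sphere is a
   retract.  It makes d_i negative when both edges at i+1 carry weight; c_i
   carries none then, so w_i may be added to the support of x.  Hence x and
   its image back in the complex lie in a common face, and the straight-line
   homotopy between them stays in the complex. *)

Lemma card_setI_lt (T : finType) (A B : {set T}) :
  (#|A :&: B| < #|B|)%N = ~~ (B \subset A).
Proof.
by rewrite (ltn_leqif (subset_leqif_cards (subsetIr A B))) (sameP eqP finset.setIidPr).
Qed.

Lemma sum_indicator (R : pzSemiRingType) (I : finType) (j : I) (F : I -> R) :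
  (\sum_i (i == j)%:R * F i = F j)%R.
Proof.
rewrite (bigD1 j) //= eqxx GRing.mul1r big1 ?GRing.addr0 // => i /negbTE ->.
exact: GRing.mul0r.
Qed.

Section WhiskeredCycle.
Variable n : nat.
Hypothesis n_ge3 : (3 <= n)%N.
Notation V := ('I_n + 'I_n)%type.

Definition cycle_edge (i : 'I_n) : {set V} := [set inl i; inl (ordS i)].
Definition whisker_edge (i : 'I_n) : {set V} := [set inl i; inr i].

Lemma val_ordS (i : 'I_n) : val (ordS i) = if i.+1 == n then 0%N else i.+1.
Proof.
rewrite /=; case: eqP => [->|Si_neq]; first exact: modnn.
by rewrite modn_small //; have := ltn_ord i; lia.
Qed.

Lemma ordS_neq (i : 'I_n) : ordS i != i.
Proof. apply/eqP => /(congr1 (@nat_of_ord _)); rewrite val_ordS; case: eqP; lia. Qed.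

Lemma ordSS_neq (i : 'I_n) : ordS (ordS i) != i.
Proof.
apply/eqP => /(congr1 (@nat_of_ord _)); rewrite !val_ordS.
by have := ltn_ord i; case: eqP; case: eqP; lia.
Qed.

Lemma ord_pred_neq (i : 'I_n) : ord_pred i != i.
Proof. by rewrite -(inj_eq (@ordS_inj _)) ord_predK eq_sym ordS_neq. Qed.

Lemma cycle_edge_inj : injective cycle_edge.
Proof.
move=> i j eq_ij.
have : inl i \in cycle_edge j by rewrite -eq_ij !inE eqxx.
rewrite !inE => /orP [/eqP [] //|/eqP ij].
have : inl (ordS i) \in cycle_edge j by rewrite -eq_ij !inE eqxx orbT.
rewrite !inE => /orP [/eqP ji|/eqP Sij]; last exact: ordS_inj (inl_inj Sij).
by move: (ordSS_neq j); rewrite -(inl_inj ij) -(inl_inj ji) eqxx.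
Qed.

Lemma whisker_edge_inj : injective whisker_edge.
Proof. by move=> i j /setP /(_ (inr i)); rewrite !inE eqxx => /esym /eqP []. Qed.

Lemma cycle_whisker_edge_eqF i j : (cycle_edge i == whisker_edge j) = false.
Proof. by apply/eqP => /setP /(_ (inr j)); rewrite !inE eqxx. Qed.

Lemma cycle_edge_in i : cycle_edge i \in edges (@WC_adj n).
Proof.
rewrite inE; apply/existsP; exists (inl i); apply/existsP; exists (inl (ordS i)).
by rewrite eqxx andbT /= eqxx.
Qed.

Lemma whisker_edge_in i : whisker_edge i \in edges (@WC_adj n).
Proof.
rewrite inE; apply/existsP; exists (inl i); apply/existsP; exists (inr i).
by rewrite eqxx andbT /= eqxx.
Qed.

Lemma WC_edgeP e : e \in edges (@WC_adj n) ->
  (exists i, e = cycle_edge i) \/ (exists i, e = whisker_edge i).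
Proof.
rewrite inE => /existsP [[x|x]] /existsP [[y|y]] //= /andP [adj_xy /eqP ->].
- case/orP: adj_xy => /eqP Sx; left.
  + by exists x; congr [set _; inl _]; apply: val_inj.
  + by exists y; rewrite finset.setUC; congr [set _; inl _]; apply: val_inj.
- by right; exists x; move/eqP: adj_xy => <-.
- by right; exists y; move/eqP: adj_xy => ->; rewrite finset.setUC.
Qed.

Definition cycle_star (j : 'I_n) : {set {set V}} :=
  [set cycle_edge (ord_pred j); cycle_edge j; whisker_edge j].

Lemma card_cycle_star j : #|cycle_star j| = 3%N.
Proof.
rewrite /cycle_star -finset.setUA cardsU1 cards2 !inE (inj_eq cycle_edge_inj).
by rewrite (negbTE (ord_pred_neq j)) !cycle_whisker_edge_eqF.
Qed.

Lemma inl_in_WC_edge j e : e \in edges (@WC_adj n) ->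
  (inl j \in e) = (e \in cycle_star j).
Proof.
case/WC_edgeP => [[i ->]|[i ->]]; rewrite !inE !(inj_eq inl_inj).
- rewrite !(inj_eq cycle_edge_inj) -(inj_eq (@ordS_inj _) i) ord_predK.
  by rewrite cycle_whisker_edge_eqF orbF orbC eq_sym [j == i]eq_sym.
- rewrite (inj_eq whisker_edge_inj) ![whisker_edge i == _]eq_sym.
  rewrite !cycle_whisker_edge_eqF eq_sym.
  by case: (i == j).
Qed.

Lemma inr_in_WC_edge j e : e \in edges (@WC_adj n) ->
  (inr j \in e) = (e == whisker_edge j).
Proof.
case/WC_edgeP => [[i ->]|[i ->]]; rewrite !inE.
  by rewrite eq_sym cycle_whisker_edge_eqF.
by rewrite (inj_eq whisker_edge_inj) (inj_eq inr_inj) eq_sym.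
Qed.

Lemma edges_at_inl (F : {set {set V}}) j : F \subset edges (@WC_adj n) ->
  [set e in F | inl j \in e] = F :&: cycle_star j.
Proof.
move=> sub; apply/setP => e; rewrite inE [in RHS]inE.
by case eF: (e \in F); rewrite //= (inl_in_WC_edge _ (fintype.subsetP sub _ eF)).
Qed.

Lemma edges_at_inr (F : {set {set V}}) j : F \subset edges (@WC_adj n) ->
  [set e in F | inr j \in e] \subset [set whisker_edge j].
Proof.
move=> sub; apply/fintype.subsetP => e; rewrite !inE => /andP [eF].
by rewrite (inr_in_WC_edge _ (fintype.subsetP sub _ eF)).
Qed.

Lemma two_matchingP (F : {set {set V}}) :
  reflect (F \subset edges (@WC_adj n) /\ forall j, ~~ (cycle_star j \subset F))
          (F \in two_matching_complex (@WC_adj n)).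
Proof.
have deg_inl j : F \subset edges (@WC_adj n) ->
    (#|[set e in F | inl j \in e]| <= 2)%N = ~~ (cycle_star j \subset F).
  by move=> sub; rewrite edges_at_inl // -card_setI_lt card_cycle_star.
rewrite inE; apply: (iffP andP) => [[sub /forallP deg]|[sub star]].
  by split=> // j; rewrite -deg_inl // deg.
split=> //; apply/forallP => [[j|j]]; first by rewrite deg_inl.
by rewrite (leq_trans (subset_leq_card (edges_at_inr j sub))) ?cards1.
Qed.

End WhiskeredCycle.

Local Open Scope classical_set_scope.
Local Open Scope ring_scope.

Section PointwiseContinuity.
Variables (R : realType) (T : eqType).
Notation X := {ptws T -> R}.

Lemma ptws_continuous_at (Z : topologicalType) (G : Z -> X) (z : Z) :
  (forall t, {for z, continuous (fun y => G y t)}) -> {for z, continuous G}.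
Proof.
move=> cont_G; apply/cvg_sup => t; apply/cvg_image.
  by rewrite eqEsubset; split=> // r _; exists (fun _ => r).
move=> W /cont_G WGt; exists ((fun x : T -> R => x t) @^-1` W) => //.
by rewrite eqEsubset; split=> [r [x Wx <-] //|r Wr]; exists (fun _ => r).
Qed.

Lemma ptws_coord_continuous (t : T) : continuous (fun x : X => x t).
Proof. exact: proj_continuous. Qed.

Lemma sum_continuous_at (Z : topologicalType) (I : Type) (r : seq I) (P : pred I)
    (F : I -> Z -> R) (z : Z) :
  (forall i, {for z, continuous (F i)}) ->
  {for z, continuous (fun y => \sum_(i <- r | P i) F i y)}.
Proof.
move=> cont_F; apply: cvg_big => //; first exact: (@add_continuous R^o).
by move=> i _; exact: cont_F.
Qed.

Lemma fst_continuous (U V : topologicalType) : continuous (@fst U V).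
Proof. by case=> u v; exact: cvg_fst. Qed.

Lemma snd_continuous (U V : topologicalType) : continuous (@snd U V).
Proof. by case=> u v; exact: cvg_snd. Qed.

End PointwiseContinuity.

Section SegmentHomotopy.
Variables (R : realType) (T : eqType).
Notation X := {ptws T -> R}.
Variables (Y : topologicalType) (A : set X) (B : set Y) (f : X -> Y) (g : Y -> X).
Hypotheses (cont_f : forall a, A a -> {for a, continuous f})
           (cont_g : forall b, B b -> {for b, continuous g})
           (fA : forall a, A a -> B (f a)) (gB : forall b, B b -> A (g b))
           (fgK : forall b, B b -> f (g b) = b)
           (segment_in : forall t a, 0 <= t <= 1 -> A a ->
                          A (fun u => (1 - t) * g (f a) u + t * a u)).

Let segment (p : R * X) : X := fun u => (1 - p.1) * g (f p.2) u + p.1 * p.2 u.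

Lemma segment_continuous : {within `[0, 1] `*` A, continuous segment}.
Proof.
apply: continuous_in_subspaceT => -[t a] /set_mem [_ Aa] /=.
apply: ptws_continuous_at => u; rewrite /segment /=.
have cont_t := @fst_continuous R X (t, a).
have cont_a :=
  continuous_comp (@snd_continuous R X (t, a)) (@ptws_coord_continuous R T u a).
have cont_gf : {for (t, a), continuous (fun q : R * X => g (f q.2) u)}.
  have cont_f2 := continuous_comp (@snd_continuous R X (t, a)) (cont_f Aa).
  have cont_gf2 := continuous_comp cont_f2 (cont_g (fA Aa)).
  exact: continuous_comp cont_gf2 (@ptws_coord_continuous R T u _).
have cont_1t := continuousB (@cst_continuous _ _ (1 : R) (t, a)) cont_t.
exact: continuousD (continuousM cont_1t cont_gf) (continuousM cont_t cont_a).
Qed.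

Lemma homotopy_equivalent_segment_retract : homotopy_equivalent R A B.
Proof.
exists f, g; split; [split|split].
- by apply: continuous_in_subspaceT => a /set_mem /cont_f.
- by apply: continuous_in_subspaceT => b /set_mem /cont_g.
- exact: fA.
- exact: gB.
- exists segment; split; first exact: segment_continuous.
  split; first by move=> t a; rewrite in_itv /= => t01 Aa; exact: segment_in.
  by split=> a _; apply: funext => u; rewrite /segment /= ?subr0 ?subrr; lra.
- exists snd; split; first by apply: continuous_subspaceT => p; exact: snd_continuous.
  by split=> //; split=> b Bb //=; rewrite fgK.
Qed.

End SegmentHomotopy.

Section PosNegParts.
Variable R : realType.
Implicit Types r : R.

Definition pos_part r := (`|r| + r) / 2.
Definition neg_part r := (`|r| - r) / 2.

Let normE r : (0 <= r /\ `|r| = r) \/ (r < 0 /\ `|r| = - r).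
Proof.
by case: (leP 0 r) => r0; [left; rewrite ger0_norm | right; rewrite ltr0_norm].
Qed.

Lemma pos_part_ge0 r : 0 <= pos_part r.
Proof. by rewrite /pos_part; case: (normE r) => -[r0 ->]; lra. Qed.

Lemma neg_part_ge0 r : 0 <= neg_part r.
Proof. by rewrite /neg_part; case: (normE r) => -[r0 ->]; lra. Qed.

Lemma pos_part_gt0 r : (0 < pos_part r) = (0 < r).
Proof. by rewrite /pos_part; case: (normE r) => -[r0 ->]; apply/idP/idP; lra. Qed.

Lemma neg_part_gt0 r : (0 < neg_part r) = (r < 0).
Proof. by rewrite /neg_part; case: (normE r) => -[r0 ->]; apply/idP/idP; lra. Qed.

Lemma pos_partB_neg_part r : pos_part r - neg_part r = r.
Proof. by rewrite /pos_part /neg_part; lra. Qed.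

Lemma pos_partD_neg_part r : pos_part r + neg_part r = `|r|.
Proof. by rewrite /pos_part /neg_part; lra. Qed.

Lemma min_pos_part_neg_part r : Num.min (pos_part r) (neg_part r) = 0.
Proof.
rewrite /pos_part /neg_part; case: (normE r) => -[r0 ->].
  by rewrite subrr mul0r; apply/min_idPr; lra.
by rewrite addNr mul0r; apply/min_idPl; lra.
Qed.

Lemma pos_part_continuous (Z : topologicalType) (h : Z -> R) z :
  {for z, continuous h} -> {for z, continuous (fun y => pos_part (h y))}.
Proof.
move=> cont_h; have cont_abs := continuous_comp cont_h (@norm_continuous _ R^o _).
exact: continuousM (continuousD cont_abs cont_h) (@cst_continuous _ _ (2^-1 : R) z).
Qed.

Lemma neg_part_continuous (Z : topologicalType) (h : Z -> R) z :
  {for z, continuous h} -> {for z, continuous (fun y => neg_part (h y))}.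
Proof.
move=> cont_h; have cont_abs := continuous_comp cont_h (@norm_continuous _ R^o _).
exact: continuousM (continuousB cont_abs cont_h) (@cst_continuous _ _ (2^-1 : R) z).
Qed.

End PosNegParts.

Section WhiskeredCycleSphere.
Variables (R : realType) (n : nat).
Hypothesis n_ge3 : (3 <= n)%N.
Notation V := ('I_n + 'I_n)%type.
Notation X := {ptws {set V} -> R}.
Notation Y := {ptws 'I_n -> R}.
Notation K := (two_matching_complex (@WC_adj n)).
Notation ce := (@cycle_edge n).
Notation we := (@whisker_edge n).

Definition corner_min (x : X) (i : 'I_n) : R := Num.min (x (ce i)) (x (we i)).

Definition signed_weight (x : X) (i : 'I_n) : R :=
  x (ce i) - x (we i) - 2 * corner_min x (ordS i).

Definition norm1 (s : 'I_n -> R) : R := \sum_i `|s i|.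
Definition norm2 (s : 'I_n -> R) : R := Num.sqrt (\sum_i s i ^+ 2).

Definition to_sphere (x : X) : Y := fun i => signed_weight x i / norm2 (signed_weight x).

Definition to_complex (s : Y) : X := fun t =>
  (\sum_i ((t == ce i)%:R * pos_part (s i) + (t == we i)%:R * neg_part (s i))) / norm1 s.

Definition sign_face (s : 'I_n -> R) : {set {set V}} :=
  [set t | [exists i, (t == ce i) && (0 < s i) || (t == we i) && (s i < 0)]].

(* Adding w_i is harmless when c_(i+1) and w_(i+1) are in the face F, since
   c_i then is not. *)
Definition saturate (F : {set {set V}}) : {set {set V}} :=
  F :|: [set we i | i in [pred i | (ce (ordS i) \in F) && (we (ordS i) \in F)]].

Lemma signed_weight_continuous i : continuous (fun y : X => signed_weight y i).
Proof.
move=> x; have coord (t : {set V}) := @ptws_coord_continuous R _ t x.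
have cont_min := continuous_min (coord (ce (ordS i))) (coord (we (ordS i))).
exact: continuousB (continuousB (coord _) (coord _))
                   (continuousM (@cst_continuous _ _ (2 : R) x) cont_min).
Qed.

Lemma to_sphere_continuous (x : X) :
  norm2 (signed_weight x) != 0 -> {for x, continuous to_sphere}.
Proof.
move=> nz; apply: ptws_continuous_at => i; rewrite /to_sphere.
have cont_d j := @signed_weight_continuous j x.
have cont_sq j := continuousM (cont_d j) (cont_d j).
have cont_norm : {for x, continuous (fun y => norm2 (signed_weight y))}.
  exact: continuous_comp (sum_continuous_at cont_sq) (@sqrt_continuous R _).
have cont_inv := continuousV (s := fun y => norm2 (signed_weight y)) nz cont_norm.
exact: continuousM (cont_d i) cont_inv.
Qed.

Lemma to_complex_continuous (s : Y) : norm1 s != 0 -> {for s, continuous to_complex}.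
Proof.
move=> nz; apply: ptws_continuous_at => t; rewrite /to_complex.
have coord (i : 'I_n) := @ptws_coord_continuous R _ i s.
have cont_norm1 : {for s, continuous (fun y : Y => norm1 y)}.
  exact: sum_continuous_at (fun i => continuous_comp (coord i) (@norm_continuous _ R^o _)).
apply: continuousM (continuousV (s := fun y : Y => norm1 y) nz cont_norm1).
apply: sum_continuous_at => i; apply: continuousD.
  exact: continuousM (@cst_continuous _ _ _ s) (pos_part_continuous (coord i)).
exact: continuousM (@cst_continuous _ _ _ s) (neg_part_continuous (coord i)).
Qed.

Lemma to_complex_cycle_edge (s : Y) j : to_complex s (ce j) = pos_part (s j) / norm1 s.
Proof.
congr (_ / _); rewrite -(sum_indicator j (fun i => pos_part (s i))).
apply: eq_bigr => i _.
rewrite (inj_eq (cycle_edge_inj n_ge3)) cycle_whisker_edge_eqF.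
by rewrite mul0r addr0 [j == i]eq_sym.
Qed.

Lemma to_complex_whisker_edge (s : Y) j : to_complex s (we j) = neg_part (s j) / norm1 s.
Proof.
congr (_ / _); rewrite -(sum_indicator j (fun i => neg_part (s i))).
apply: eq_bigr => i _.
rewrite (inj_eq (@whisker_edge_inj n)) eq_sym cycle_whisker_edge_eqF.
by rewrite mul0r add0r [j == i]eq_sym.
Qed.

Lemma norm1_ge0 (s : 'I_n -> R) : 0 <= norm1 s.
Proof. exact: sumr_ge0. Qed.

Lemma norm1_sphere_neq0 (s : Y) : sphere R n s -> norm1 s != 0.
Proof.
move=> s1; apply/eqP => /(psumr_eq0P (fun i _ => normr_ge0 (s i))) s0.
move: s1; rewrite /sphere /= big1 => [/eqP|i _]; first by rewrite eq_sym oner_eq0.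
by move/eqP: (s0 i isT); rewrite normr_eq0 => /eqP ->; rewrite expr0n.
Qed.

Lemma to_complex_ge0 (s : Y) t : 0 <= to_complex s t.
Proof.
rewrite divr_ge0 ?norm1_ge0 //; apply: sumr_ge0 => i _.
by rewrite addr_ge0 // mulr_ge0 ?ler0n ?pos_part_ge0 ?neg_part_ge0.
Qed.

Lemma to_complex_sum (s : Y) : norm1 s != 0 -> \sum_t to_complex s t = 1.
Proof.
move=> nz; rewrite -mulr_suml exchange_big /= (eq_bigr (fun i => `|s i|)) ?divff // => i _.
rewrite big_split /= -pos_partD_neg_part.
rewrite (sum_indicator (ce i) (fun=> pos_part (s i))).
by rewrite (sum_indicator (we i) (fun=> neg_part (s i))).
Qed.

Lemma sign_face_cycle_edge (s : 'I_n -> R) j : (ce j \in sign_face s) = (0 < s j).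
Proof.
rewrite inE; apply/existsP/idP => [[i]|sj]; last by exists j; rewrite eqxx sj.
by rewrite (inj_eq (cycle_edge_inj n_ge3)) cycle_whisker_edge_eqF orbF => /andP [/eqP ->].
Qed.

Lemma sign_face_whisker_edge (s : 'I_n -> R) j : (we j \in sign_face s) = (s j < 0).
Proof.
rewrite inE; apply/existsP/idP => [[i]|sj]; last by exists j; rewrite eqxx sj orbT.
by rewrite (inj_eq (@whisker_edge_inj n)) eq_sym cycle_whisker_edge_eqF => /andP [/eqP ->].
Qed.

Lemma sign_face_in_complex (s : 'I_n -> R) : sign_face s \in K.
Proof.
apply/(two_matchingP n_ge3); split.
  apply/fintype.subsetP => t; rewrite inE => /existsP [i] /orP [] /andP [/eqP -> _].
    exact: cycle_edge_in.
  exact: whisker_edge_in.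
move=> j; apply/negP; rewrite /cycle_star !finset.subUset !finset.sub1set.
rewrite !sign_face_cycle_edge sign_face_whisker_edge.
by move=> /andP [/andP [_ pos] /(lt_trans pos)]; rewrite ltxx.
Qed.

Lemma to_complex_support (s : Y) t : to_complex s t != 0 -> t \in sign_face s.
Proof.
apply: contraR => t_out; rewrite /to_complex big1 ?mul0r // => i _.
move: t_out; have [->|_] := eqVneq t (ce i).
  rewrite sign_face_cycle_edge -pos_part_gt0 lt_def pos_part_ge0 andbT negbK => /eqP ->.
  by rewrite cycle_whisker_edge_eqF mulr0 mul0r addr0.
rewrite mul0r add0r; have [->|_] := eqVneq t (we i); last by rewrite mul0r.
rewrite sign_face_whisker_edge -neg_part_gt0 lt_def neg_part_ge0 andbT negbK.
by move=> /eqP ->; rewrite mulr0.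
Qed.

Lemma to_complex_in_complex (s : Y) : sphere R n s -> realization R K (to_complex s).
Proof.
move=> /norm1_sphere_neq0 nz; split; first exact: to_complex_ge0.
split; first exact: to_complex_sum.
by exists (sign_face s); [exact: sign_face_in_complex | exact: to_complex_support].
Qed.

Lemma corner_min_ge0 (x : X) i : (forall t, 0 <= x t) -> 0 <= corner_min x i.
Proof. by move=> x_ge0; rewrite le_min !x_ge0. Qed.

Lemma corner_min_gt0 (x : X) i :
  (0 < corner_min x i) = (0 < x (ce i)) && (0 < x (we i)).
Proof. exact: lt_min. Qed.

Lemma prev_cycle_edge_eq0 (x : X) F : F \in K -> (forall t, x t != 0 -> t \in F) ->
  forall i, 0 < corner_min x (ordS i) -> x (ce i) = 0.
Proof.
move=> /(two_matchingP n_ge3) [] _ F_star x_supp i.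
rewrite corner_min_gt0 => /andP [c_gt0 w_gt0].
apply: contraTeq (F_star (ordS i)) => /x_supp cF.
rewrite negbK /cycle_star ordSK !finset.subUset !finset.sub1set cF.
by rewrite !x_supp ?gt_eqF.
Qed.

Lemma realization_edge_weight (x : X) : realization R K x ->
  [exists i, (x (ce i) != 0) || (x (we i) != 0)].
Proof.
move=> [_ [x_sum [F /(two_matchingP n_ge3) [] F_edges _ x_supp]]].
apply: contraT; rewrite negb_exists => /forallP edge0.
have x0 t : x t = 0.
  apply/eqP; apply: contraT => xt.
  case/WC_edgeP: (fintype.subsetP F_edges _ (x_supp _ xt)) => -[i ti].
    by move: (edge0 i); rewrite -ti xt.
  by move: (edge0 i); rewrite -ti xt orbT.
by move: x_sum; rewrite big1 // => /eqP; rewrite eq_sym oner_eq0.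
Qed.

Lemma signed_weight_neq0 (x : X) : realization R K x -> norm2 (signed_weight x) != 0.
Proof.
move=> Kx; have [x_ge0 [_ [F FK x_supp]]] := Kx.
rewrite /norm2 sqrtr_eq0 -ltNge lt_def sumr_ge0 ?andbT => [|i _]; last exact: sqr_ge0.
apply: contraTneq (realization_edge_weight Kx).
move=> /(psumr_eq0P (fun i _ => sqr_ge0 (signed_weight x i))) sq0.
have d0 i : signed_weight x i = 0 by apply/eqP; rewrite -sqrf_eq0 sq0.
have m0 i : corner_min x (ordS i) = 0.
  apply/eqP; rewrite eq_le corner_min_ge0 // andbT leNgt; apply/negP => m_gt0.
  have := d0 i; rewrite /signed_weight (prev_cycle_edge_eq0 FK x_supp m_gt0).
  by have := x_ge0 (we i); lra.
rewrite negb_exists; apply/forallP => i.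
have := d0 i; rewrite /signed_weight m0 mulr0 subr0 => /eqP.
rewrite subr_eq0 => /eqP c_eq_w.
have := m0 (ord_pred i); rewrite ord_predK /corner_min c_eq_w minxx => w0.
by rewrite w0 eqxx.
Qed.

Lemma to_sphere_in_sphere (x : X) : realization R K x -> sphere R n (to_sphere x).
Proof.
move=> /signed_weight_neq0 nz; rewrite /sphere /= /to_sphere.
under eq_bigr do rewrite exprMn.
rewrite -mulr_suml -[\sum_i _]sqr_sqrtr ?sumr_ge0 // => [|i _]; last exact: sqr_ge0.
by rewrite -exprMn mulfV // expr1n.
Qed.

Lemma to_sphere_to_complex (s : Y) : sphere R n s -> to_sphere (to_complex s) = s.
Proof.
move=> s1; have nz := norm1_sphere_neq0 s1.
have d_eq i : signed_weight (to_complex s) i = s i / norm1 s.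
  rewrite /signed_weight /corner_min !to_complex_cycle_edge !to_complex_whisker_edge.
  rewrite -mulrBl pos_partB_neg_part -minr_pMl ?invr_ge0 ?norm1_ge0 //.
  by rewrite min_pos_part_neg_part mul0r mulr0 subr0.
apply: funext => i; rewrite /to_sphere /norm2 d_eq.
under eq_bigr do rewrite d_eq exprMn.
rewrite -mulr_suml s1 mul1r sqrtr_sqr ger0_norm ?invr_ge0 ?norm1_ge0 //.
by rewrite invrK -mulrA mulVf ?mulr1.
Qed.

Lemma saturate_cycle_edge F j : (ce j \in saturate F) = (ce j \in F).
Proof.
rewrite /saturate finset.in_setU; case: (ce j \in F) => //=.
by apply/imsetP => -[i _ /eqP]; rewrite cycle_whisker_edge_eqF.
Qed.

Lemma saturate_whisker_edge F j : (we j \in saturate F) =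
  (we j \in F) || (ce (ordS j) \in F) && (we (ordS j) \in F).
Proof. by rewrite /saturate finset.in_setU (mem_imset _ _ (@whisker_edge_inj n)) inE. Qed.

Lemma saturate_in_complex F : F \in K -> saturate F \in K.
Proof.
move=> /(two_matchingP n_ge3) [F_edges F_star]; apply/(two_matchingP n_ge3); split.
  rewrite finset.subUset F_edges /=; apply/fintype.subsetP => e /imsetP [i _ ->].
  exact: whisker_edge_in.
move=> j; have := F_star j; have := F_star (ordS j).
rewrite /cycle_star ordSK !finset.subUset !finset.sub1set.
rewrite !saturate_cycle_edge saturate_whisker_edge.
by case: (ce (ord_pred j) \in F); case: (ce j \in F); case: (we j \in F);
  case: (ce (ordS j) \in F); case: (we (ordS j) \in F).
Qed.

Lemma sign_face_pdivr (s : 'I_n -> R) c :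
  0 < c -> sign_face (fun i => s i / c) = sign_face s.
Proof.
move=> c_gt0; apply/setP => t; rewrite !inE.
by under eq_existsb do rewrite pmulr_lgt0 ?pmulr_llt0 ?invr_gt0 //.
Qed.

Lemma sign_face_signed_weight_sub (x : X) F : F \in K -> (forall t, 0 <= x t) ->
  (forall t, x t != 0 -> t \in F) -> sign_face (signed_weight x) \subset saturate F.
Proof.
move=> FK x_ge0 x_supp; have m_ge0 i := corner_min_ge0 i x_ge0.
apply/fintype.subsetP => t; rewrite inE => /existsP [i] /orP [] /andP [/eqP -> d_sign].
  rewrite saturate_cycle_edge x_supp // gt_eqF //.
  move: d_sign; rewrite /signed_weight.
  by have := x_ge0 (we i); have := m_ge0 (ordS i); lra.
rewrite saturate_whisker_edge; have [/x_supp -> //|/negPn/eqP w0] := boolP (x (we i) != 0).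
have : 0 < corner_min x (ordS i).
  by move: d_sign; rewrite /signed_weight w0; have := x_ge0 (ce i); lra.
rewrite corner_min_gt0 => /andP [/lt0r_neq0/x_supp -> /lt0r_neq0/x_supp ->].
by rewrite orbT.
Qed.

Lemma segment_in_complex t (x : X) : 0 <= t <= 1 -> realization R K x ->
  realization R K (fun u => (1 - t) * to_complex (to_sphere x) u + t * x u).
Proof.
move=> /andP [t_ge0 t_le1] Kx; have d_gt0 : 0 < norm2 (signed_weight x).
  by rewrite lt_def signed_weight_neq0 ?sqrtr_ge0.
have nz := norm1_sphere_neq0 (to_sphere_in_sphere Kx).
have [x_ge0 [x_sum [F FK x_supp]]] := Kx.
split=> [u|].
  by apply: addr_ge0; apply: mulr_ge0; rewrite ?subr_ge0 ?to_complex_ge0 ?x_ge0.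
split; first by rewrite big_split /= -!mulr_sumr to_complex_sum // x_sum; lra.
exists (saturate F); first exact: saturate_in_complex.
move=> u; have [/x_supp uF _|/negPn/eqP ->] := boolP (x u != 0).
  by rewrite finset.in_setU uF.
rewrite mulr0 addr0 mulf_eq0 negb_or => /andP [_ /to_complex_support].
rewrite sign_face_pdivr //.
exact: (fintype.subsetP (sign_face_signed_weight_sub FK x_ge0 x_supp)).
Qed.

End WhiskeredCycleSphere.

Theorem mainTheorem7 (R : realType) (n : nat) :
  (3 <= n)%N -> odd n ->
  homotopy_equivalent R
    (realization R (two_matching_complex (@WC_adj n)))
    (sphere R n).
Proof.
(* The argument does not use that n is odd. *)
move=> n_ge3 _.
apply: (homotopy_equivalent_segment_retract (f := @to_sphere R n) (g := @to_complex R n)).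
- by move=> x /(signed_weight_neq0 n_ge3) /to_sphere_continuous.
- by move=> s /norm1_sphere_neq0 /to_complex_continuous.
- exact: to_sphere_in_sphere.
- exact: to_complex_in_complex.
- exact: to_sphere_to_complex.
- by move=> t x t01 /(segment_in_complex n_ge3 t01).
Qed.
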